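(* The sequence $$\left\{1-\frac{1}{\log(n+2)}\log\left(\frac{(n+2)\log(n+2)-\log4}{n}\right)\right\}_{n\in\mathbb{N}}$$ is strictly increasing.
   Context: $\mathbb{N}=\{1,2,3,\dots\}$. *)

From Stdlib Require Import Reals.
Open Scope R_scope.

Definition seq8p2 (n : nat) : R :=
  1 - / ln (INR n + 2) * ln (((INR n + 2) * ln (INR n + 2) - ln 4) / INR n).

From Stdlib Require Import Reals Lra Psatz.
From Coquelicot Require Import Coquelicot.
Open Scope R_scope.

(* Extend the sequence to g(x) on [1, oo) and show g' > 0.  With t = x + 2,
   L = ln t, c = ln 4 and A = t L - c, the sign of g' is that of
   ln(A/x)/t - L (x - 2L + c)/(x A).  Bounding ln(A/x) from below by the
   Pade-type estimate ln(b/a) >= 2(b-a)/(b+a) reduces this to the positivity of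
   a polynomial in t, L, c.  The polynomial is positive once L is again replaced
   by the same estimate (for ln(t/4) when t >= 4, for ln(t/2) when 3 <= t <= 4):
   after a change of variables it has only nonnegative coefficients. *)

Lemma ln_sub_ge a b : 0 < a -> a <= b -> 2 * (b - a) <= (b + a) * (ln b - ln a).
Proof.
  intros Ha Hab.
  destruct (MVT_gen (fun z => ln z - 2 * (z - a) / (z + a)) a b
              (fun z => (z - a) ^ 2 / (z * (z + a) ^ 2))) as [z [Hz Hmvt]].
  - intros z Hz; rewrite Rmin_left, Rmax_right in Hz by lra.
    auto_derive; [lra | field; lra].
  - intros z Hz; rewrite Rmin_left, Rmax_right in Hz by lra.
    apply continuity_pt_filterlim, (ex_derive_continuous (fun z => ln z - 2 * (z - a) / (z + a))).
    auto_derive; lra.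
  - rewrite Rmin_left, Rmax_right in Hz by lra.
    assert (0 <= (z - a) ^ 2 / (z * (z + a) ^ 2)).
    { apply Rdiv_le_0_compat; [nra | apply Rmult_lt_0_compat; nra]. }
    replace (2 * (a - a) / (a + a)) with 0 in Hmvt by (field; lra).
    replace (2 * (b - a)) with ((b + a) * (2 * (b - a) / (b + a))) by (field; lra).
    apply Rmult_le_compat_l; nra.
Qed.

Lemma ln_4_ge : 6 / 5 <= ln 4.
Proof. pose proof (ln_sub_ge 1 4) as H; rewrite ln_1 in H; lra. Qed.

Lemma ln_4_lt : ln 4 < 2.
Proof.
  assert (H2e : 2 < exp 1) by (pose proof (exp_ineq1 1); lra).
  replace 4 with (2 * 2) by lra; rewrite ln_mult by lra.
  assert (ln 2 < ln (exp 1)) by (apply ln_increasing; lra).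
  rewrite ln_exp in *; lra.
Qed.

Lemma ln_4_half : ln 4 / 2 = ln 2.
Proof. replace 4 with (2 * 2) by lra; rewrite ln_mult by lra; lra. Qed.

(* With x = t - 2 and A = t L - c: the numerator t x A L^2 g'(x) =
   x A ln(A/x) - t L (x - 2L + c), with ln(A/x) replaced by its lower bound
   2 (A - x)/(A + x), and multiplied by A + x. *)
Definition crit (t L c : R) : R :=
  let x := t - 2 in let A := t * L - c in
  2 * (A - x) * x * A - t * L * (x - 2 * L + c) * (A + x).

(* [crit t L c * (t + 4)^3] in the variables u = t - 4,
   w = (t + 4)(L - c) - 2(t - 4) and e = c - 6/5. *)
Definition crit_cert_large (u w e : R) : R :=
  (98304/125)
  + (765952/25)*e
  + (161792/5)*e^2
  + (6144)*e^3
  + (165888/25)*w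
  + (60416/5)*w*e
  + (3328)*w*e^2
  + (5376/5)*w^2
  + (576)*w^2*e
  + (32)*w^3
  + (503808/125)*u
  + (1288704/25)*u*e
  + (214784/5)*u*e^2
  + (5888)*u*e^3
  + (242688/25)*u*w
  + (69376/5)*u*w*e
  + (2688)*u*w*e^2
  + (5216/5)*u*w^2
  + (376)*u*w^2*e
  + (16)*u*w^3
  + (605184/125)*u^2
  + (840512/25)*u^2*e
  + (109472/5)*u^2*e^2
  + (2144)*u^2*e^3
  + (129952/25)*u^2*w
  + (28624/5)*u^2*w*e
  + (772)*u^2*w*e^2
  + (1648/5)*u^2*w^2
  + (78)*u^2*w^2*e
  + (2)*u^2*w^3
  + (300352/125)*u^3
  + (268376/25)*u^3*e
  + (27396/5)*u^3*e^2
  + (372)*u^3*e^3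
  + (30968/25)*u^3*w
  + (5236/5)*u^3*w*e
  + (93)*u^3*w*e^2
  + (38)*u^3*w^2
  + (5)*u^3*w^2*e
  + (67256/125)*u^4
  + (43368/25)*u^4*e
  + (3518/5)*u^4*e^2
  + (31)*u^4*e^3
  + (3104/25)*u^4*w
  + (408/5)*u^4*w*e
  + (4)*u^4*w*e^2
  + (1)*u^4*w^2
  + (5916/125)*u^5
  + (3258/25)*u^5*e
  + (218/5)*u^5*e^2
  + (1)*u^5*e^3
  + (17/5)*u^5*w
  + (2)*u^5*w*e
  + (16/25)*u^6
  + (17/5)*u^6*e
  + (1)*u^6*e^2.
(* [crit t L c * (t + 2)^3] in the variables u = t - 3,
   w = (t + 2)(L - c/2) - 2(t - 2) and e = c - 6/5; only the u^6 coefficient is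
   negative, which is harmless for u <= 1. *)
Definition crit_cert_small (u w e : R) : R :=
  (150)
  + (365/2)*e
  + (175/4)*e^2
  + (723)*w
  + (405)*w*e
  + (75/2)*w*e^2
  + (255)*w^2
  + (60)*w^2*e
  + (18)*w^3
  + (2684/5)*u
  + (660)*u*e
  + (155)*u*e^2
  + (8531/5)*u*w
  + (849)*u*w*e
  + (65)*u*w*e^2
  + (1922/5)*u*w^2
  + (62)*u*w^2*e
  + (12)*u*w^3
  + (17978/25)*u^2
  + (9057/10)*u^2*e
  + (827/4)*u^2*e^2
  + (35154/25)*u^2*w
  + (3038/5)*u^2*w*e
  + (34)*u^2*w*e^2
  + (176)*u^2*w^2
  + (20)*u^2*w^2*e
  + (2)*u^2*w^3
  + (10888/25)*u^3
  + (2916/5)*u^3*e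
  + (128)*u^3*e^2
  + (12202/25)*u^3*w
  + (934/5)*u^3*w*e
  + (7)*u^3*w*e^2
  + (142/5)*u^3*w^2
  + (2)*u^3*w^2*e
  + (2746/25)*u^4
  + (1779/10)*u^4*e
  + (149/4)*u^4*e^2
  + (1683/25)*u^4*w
  + (121/5)*u^4*w*e
  + (1/2)*u^4*w*e^2
  + (1)*u^4*w^2
  + (28/5)*u^5
  + (24)*u^5*e
  + (5)*u^5*e^2
  + (11/5)*u^5*w
  + (1)*u^5*w*e
  + (-26/25)*u^6
  + (11/10)*u^6*e
  + (1/4)*u^6*e^2.


Ltac assert_monomials_nonneg p :=
  lazymatch p with
  | ?a + ?b => assert_monomials_nonneg a; assert_monomials_nonneg b
  | _ => try assert (0 <= p) by (repeat apply Rmult_le_pos; try apply pow_le; lra)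
  end.

Lemma crit_cert_large_pos u w e : 0 <= u -> 0 <= w -> 0 <= e -> 0 < crit_cert_large u w e.
Proof.
  intros; unfold crit_cert_large.
  match goal with |- 0 < ?p => assert_monomials_nonneg p end; lra.
Qed.

Lemma crit_cert_small_pos u w e : 0 <= u <= 1 -> 0 <= w -> 0 <= e -> 0 < crit_cert_small u w e.
Proof.
  intros; unfold crit_cert_small.
  match goal with |- 0 < ?p => assert_monomials_nonneg p end.
  assert (u ^ 6 <= 1) by (rewrite <- (pow1 6); apply pow_incr; lra).
  lra.
Qed.

Lemma crit_pos_large t L c :
  4 <= t -> 6 / 5 <= c -> 2 * (t - 4) <= (t + 4) * (L - c) -> 0 < crit t L c.
Proof.
  intros Ht Hc HL.
  assert (Hcert : crit t L c * (t + 4) ^ 3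
                  = crit_cert_large (t - 4) ((t + 4) * (L - c) - 2 * (t - 4)) (c - 6 / 5))
    by (unfold crit, crit_cert_large; field).
  pose proof (crit_cert_large_pos (t - 4) ((t + 4) * (L - c) - 2 * (t - 4)) (c - 6 / 5)).
  assert (0 < (t + 4) ^ 3) by (apply pow_lt; lra).
  nra.
Qed.

Lemma crit_pos_small t L c :
  3 <= t <= 4 -> 6 / 5 <= c -> 2 * (t - 2) <= (t + 2) * (L - c / 2) -> 0 < crit t L c.
Proof.
  intros Ht Hc HL.
  assert (Hcert : crit t L c * (t + 2) ^ 3
                  = crit_cert_small (t - 3) ((t + 2) * (L - c / 2) - 2 * (t - 2)) (c - 6 / 5))
    by (unfold crit, crit_cert_small; field).
  pose proof (crit_cert_small_pos (t - 3) ((t + 2) * (L - c / 2) - 2 * (t - 2)) (c - 6 / 5)).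
  assert (0 < (t + 2) ^ 3) by (apply pow_lt; lra).
  nra.
Qed.

Lemma crit_ln_pos t : 3 <= t -> 0 < crit t (ln t) (ln 4).
Proof.
  intros Ht; destruct (Rle_lt_dec 4 t) as [Ht4 | Ht4].
  - apply crit_pos_large; [lra | apply ln_4_ge | apply ln_sub_ge; lra].
  - apply crit_pos_small; [lra | apply ln_4_ge |].
    rewrite ln_4_half; apply ln_sub_ge; lra.
Qed.

Lemma ln_excess t : 3 <= t -> t - 2 < t * ln t - ln 4.
Proof.
  intros Ht.
  pose proof (ln_sub_ge 1 t ltac:(lra) ltac:(lra)) as H; rewrite ln_1 in H.
  pose proof ln_4_lt.
  nra.
Qed.

Definition seq8p2_real (x : R) : R :=
  1 - / ln (x + 2) * ln (((x + 2) * ln (x + 2) - ln 4) / x).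

Definition seq8p2_real_deriv (x : R) : R :=
  let L := ln (x + 2) in let A := (x + 2) * L - ln 4 in
  (ln (A / x) / (x + 2) - L * ((x - 2 * L + ln 4) / (x * A))) / L ^ 2.

Lemma is_derive_seq8p2_real x : 1 <= x -> is_derive seq8p2_real x (seq8p2_real_deriv x).
Proof.
  intros Hx.
  assert (HL : 0 < ln (x + 2)) by (rewrite <- ln_1; apply ln_increasing; lra).
  pose proof (ln_excess (x + 2) ltac:(lra)).
  unfold seq8p2_real; auto_derive.
  - repeat split; try lra.
    apply Rmult_lt_0_compat; [lra | apply Rinv_0_lt_compat; lra].
  - unfold seq8p2_real_deriv; cbv zeta.
    set (L := ln (x + 2)) in *; set (c := ln 4) in *.
    set (l := ln (((x + 2) * L - c) / x)).
    change (ln (((x + 2) * L + - c) * / x)) with l.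
    field; repeat split; lra.
Qed.

Lemma seq8p2_real_deriv_pos x : 1 <= x -> 0 < seq8p2_real_deriv x.
Proof.
  intros Hx; unfold seq8p2_real_deriv; cbv zeta.
  set (t := x + 2); set (L := ln t); set (c := ln 4); set (A := t * L - c).
  assert (HL : 0 < L) by (unfold L; rewrite <- ln_1; apply ln_increasing; unfold t; lra).
  assert (HAx : x < A).
  { enough (t - 2 < A) by (unfold t in *; lra).
    apply ln_excess; unfold t; lra. }
  assert (Hcrit : 0 < crit t L c) by (apply crit_ln_pos; unfold t; lra).
  assert (Hl : 2 * (A - x) * (x * A) <= (A + x) * ln (A / x) * (x * A)).
  { apply Rmult_le_compat_r; [nra |].
    rewrite ln_div by lra; apply ln_sub_ge; lra. }
  assert (Hnum : 0 < ln (A / x) * (x * A) - t * L * (x - 2 * L + c)).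
  { assert (Ht : x = t - 2) by (unfold t; lra).
    unfold crit in Hcrit; cbv zeta in Hcrit; fold A in Hcrit; rewrite <- Ht in Hcrit.
    nra. }
  apply Rdiv_lt_0_compat; [| apply pow_lt; lra].
  replace (ln (A / x) / t - L * ((x - 2 * L + c) / (x * A)))
    with ((ln (A / x) * (x * A) - t * L * (x - 2 * L + c)) / (t * (x * A)))
    by (field; unfold t; repeat split; lra).
  apply Rdiv_lt_0_compat; [lra | apply Rmult_lt_0_compat; [unfold t; lra | nra]].
Qed.

Theorem lemma8p2 : forall m n : nat, (1 <= m)%nat -> (m < n)%nat -> seq8p2 m < seq8p2 n.
Proof.
  intros m n Hm Hmn.
  change (seq8p2_real (INR m) < seq8p2_real (INR n)).
  apply le_INR in Hm; apply lt_INR in Hmn; simpl in Hm.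
  apply (incr_function_le seq8p2_real (Finite 1) p_infty seq8p2_real_deriv);
    simpl; auto.
  - intros x Hx _; exact (is_derive_seq8p2_real x Hx).
  - intros x Hx _; exact (seq8p2_real_deriv_pos x Hx).
Qed.
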